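(* Let $I\subseteq\mathbb{R}$ be an interval and $f:I\to\mathbb{R}$ a function. Let $a,b,c\in I$ be such that $\frac{a+b}{2}$, $\frac{a+c}{2}$ and $\frac{b+c}{2}$ are points of convexity of $f$ relative to the entire interval $I$. Then $$\frac{f(a)+f(b)+f(c)}{3}+f\left(\frac{a+b+c}{3}\right)\ge\frac{2}{3}\left[f\left(\frac{a+b}{2}\right)+f\left(\frac{a+c}{2}\right)+f\left(\frac{b+c}{2}\right)\right].$$
   Context: A point $p\in I$ is a point of convexity of $f$ relative to $I$ if $f(p)\le\sum_{k=1}^n\lambda_k f(x_k)$ for every finite family of points $x_1,\dots,x_n\in I$ and positive weights $\lambda_1,\dots,\lambda_n$ with $\sum_k\lambda_k=1$ and $\sum_k\lambda_k x_k=p$. *)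

From Stdlib Require Import Reals List.
Open Scope R_scope.

Definition is_interval (I : R -> Prop) : Prop :=
  forall x y z, I x -> I y -> x <= z <= y -> I z.

Definition wsum (g : R -> R) (l : list (R * R)) : R :=
  fold_right (fun p acc => fst p * g (snd p) + acc) 0 l.

Definition weights_sum (l : list (R * R)) : R :=
  fold_right (fun p acc => fst p + acc) 0 l.

Definition point_of_convexity (I : R -> Prop) (f : R -> R) (p : R) : Prop :=
  I p /\
  forall l : list (R * R),
    l <> nil ->
    Forall (fun q => 0 < fst q /\ I (snd q)) l ->
    weights_sum l = 1 ->
    wsum (fun x => x) l = p ->
    f p <= wsum f l.

(* Order the points so that one of them, say [a], is a
   pivot: both midpoints [(a + b) / 2] and [(a + c) / 2] lie on the segment from
   [a] to the centroid [s].  Convexity at these two midpoints, applied to the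
   chord [a, s], gives [2 f((a+b)/2) + 2 f((a+c)/2) <= f a + 3 f s], and
   convexity at [(b + c) / 2] gives [2 f((b+c)/2) <= f b + f c]; adding them is
   the inequality. *)

From Stdlib Require Import Reals List Lra.
Open Scope R_scope.

Lemma is_interval_between (I : R -> Prop) (x y z : R) :
  is_interval I -> I x -> I y -> 0 <= (z - x) * (y - z) -> I z.
Proof.
  intros HI Ix Iy Hz.
  destruct (Rle_dec x y).
  - apply (HI x y); auto; split; nra.
  - apply (HI y x); auto; split; nra.
Qed.

Lemma point_of_convexity_two_point (I : R -> Prop) (f : R -> R) (p x y l : R) :
  point_of_convexity I f p -> I x -> I y -> 0 < l < 1 ->
  l * x + (1 - l) * y = p -> f p <= l * f x + (1 - l) * f y.
Proof.
  intros [_ Hp] Ix Iy Hl Hbar.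
  assert (H := Hp ((l, x) :: (1 - l, y) :: nil)).
  unfold wsum, weights_sum in H; simpl in H.
  rewrite !Rplus_0_r in H.
  apply H.
  - discriminate.
  - repeat constructor; simpl; auto; lra.
  - ring.
  - exact Hbar.
Qed.

Lemma point_of_convexity_midpoint (I : R -> Prop) (f : R -> R) (x y : R) :
  point_of_convexity I f ((x + y) / 2) -> I x -> I y ->
  2 * f ((x + y) / 2) <= f x + f y.
Proof.
  intros Hm Ix Iy.
  assert (H := point_of_convexity_two_point I f _ x y (1/2) Hm Ix Iy
                 ltac:(lra) ltac:(field)).
  lra.
Qed.

(* The chord inequality multiplied by [(v - u)^2], so that it holds whatever the
   order of [u] and [v], including [u = v]. *)
Lemma point_of_convexity_chord (I : R -> Prop) (f : R -> R) (u v m : R) :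
  point_of_convexity I f m -> I u -> I v -> 0 <= (m - u) * (v - m) ->
  (v - u) ^ 2 * f m <= (v - u) * (v - m) * f u + (v - u) * (m - u) * f v.
Proof.
  intros Hm Iu Iv Hbetween.
  destruct (Req_dec m u) as [->|Hmu].
  { right; ring. }
  destruct (Req_dec m v) as [->|Hmv].
  { right; ring. }
  assert (Hint : 0 < (m - u) * (v - m)).
  { destruct Hbetween as [|E]; auto.
    symmetry in E; apply Rmult_integral in E; destruct E; lra. }
  assert (Hd : 0 < (v - u) ^ 2) by nra.
  set (l := (v - m) / (v - u)).
  assert (Hl : 0 < l < 1).
  { unfold l; split.
    - apply Rmult_lt_reg_r with ((v - u) ^ 2); [exact Hd|].
      replace ((v - m) / (v - u) * (v - u) ^ 2) with ((v - m) * (v - u))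
        by (field; nra).
      nra.
    - apply Rmult_lt_reg_r with ((v - u) ^ 2); [exact Hd|].
      replace ((v - m) / (v - u) * (v - u) ^ 2) with ((v - m) * (v - u))
        by (field; nra).
      nra. }
  assert (H := point_of_convexity_two_point I f m u v l Hm Iu Iv Hl
                 ltac:(unfold l; field; nra)).
  apply Rmult_le_compat_l with (r := (v - u) ^ 2) in H; [|lra].
  replace ((v - u) ^ 2 * (l * f u + (1 - l) * f v))
    with ((v - u) * (v - m) * f u + (v - u) * (m - u) * f v) in H
    by (unfold l; field; nra).
  exact H.
Qed.

(* [p] is a pivot when its midpoints with [q] and [r] lie between [p] and the
   centroid; [0 <= (m - x) * (y - m)] encodes "[m] lies between [x] and [y]". *)
Definition pivot (p q r : R) : Prop :=
  0 <= ((p + q) / 2 - p) * ((p + q + r) / 3 - (p + q) / 2) /\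
  0 <= ((p + r) / 2 - p) * ((p + q + r) / 3 - (p + r) / 2).

Lemma pivot_of_le (p q r : R) :
  p <= q -> p <= r -> p + q <= 2 * r -> p + r <= 2 * q -> pivot p q r.
Proof. intros; split; apply Rmult_le_pos; lra. Qed.

Lemma pivot_of_ge (p q r : R) :
  q <= p -> r <= p -> 2 * r <= p + q -> 2 * q <= p + r -> pivot p q r.
Proof. intros; split; nra. Qed.

(* Sorting [x <= y <= z], the pivot is [x] if [y] lies right of [(x + z) / 2]
   and [z] otherwise. *)
Lemma pivot_exists (a b c : R) : pivot a b c \/ pivot b a c \/ pivot c a b.
Proof.
  destruct (Rle_dec a b), (Rle_dec b c), (Rle_dec a c),
    (Rle_dec (a + c) (2 * b)), (Rle_dec (a + b) (2 * c)), (Rle_dec (b + c) (2 * a));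
  first
    [ left; apply pivot_of_le; lra
    | left; apply pivot_of_ge; lra
    | right; left; apply pivot_of_le; lra
    | right; left; apply pivot_of_ge; lra
    | right; right; apply pivot_of_le; lra
    | right; right; apply pivot_of_ge; lra ].
Qed.

Lemma popoviciu_at_pivot (I : R -> Prop) (f : R -> R) (p q r : R) :
  is_interval I -> I p -> I q -> I r ->
  point_of_convexity I f ((p + q) / 2) ->
  point_of_convexity I f ((p + r) / 2) ->
  point_of_convexity I f ((q + r) / 2) ->
  pivot p q r ->
  2 * (f ((p + q) / 2) + f ((p + r) / 2) + f ((q + r) / 2))
    <= f p + f q + f r + 3 * f ((p + q + r) / 3).
Proof.
  intros HI Ip Iq Ir Hpq Hpr Hqr [Bq Br].
  assert (Hmid := point_of_convexity_midpoint I f q r Hqr Iq Ir).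
  set (s := (p + q + r) / 3) in *.
  (* [s] is the barycenter of [p] and [(q + r) / 2] with weights 1/3, 2/3. *)
  assert (Is : I s).
  { apply (is_interval_between I p ((q + r) / 2)); auto.
    - apply Hqr.
    - replace ((s - p) * ((q + r) / 2 - s)) with ((q + r - 2 * p) ^ 2 / 18)
        by (unfold s; field).
      apply Rmult_le_pos; [apply pow2_ge_0 | lra]. }
  destruct (Req_dec s p) as [Esp|Hsp].
  { assert (q = p) by (unfold s in Esp, Bq; nra).
    assert (r = p) by (unfold s in Esp, Br; nra).
    subst q r.
    replace ((p + p) / 2) with p in * by field.
    rewrite Esp; lra. }
  assert (Cq := point_of_convexity_chord I f p s _ Hpq Ip Is Bq).
  assert (Cr := point_of_convexity_chord I f p s _ Hpr Ip Is Br).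
  (* Summing the two chords, the weights of [f p] and [f s] add up to
     [(s - p)^2] and [3 (s - p)^2], since [(p + q) / 2 + (p + r) / 2 = (3 s + p) / 2]. *)
  assert (Hsum : (s - p) ^ 2 * (2 * f ((p + q) / 2) + 2 * f ((p + r) / 2))
                 <= (s - p) ^ 2 * (f p + 3 * f s)).
  { replace ((s - p) ^ 2 * (f p + 3 * f s)) with
      (2 * ((s - p) * (s - (p + q) / 2) * f p + (s - p) * ((p + q) / 2 - p) * f s) +
       2 * ((s - p) * (s - (p + r) / 2) * f p + (s - p) * ((p + r) / 2 - p) * f s))
      by (unfold s; field).
    lra. }
  apply Rmult_le_reg_l in Hsum; [lra|].
  assert (0 < (s - p) * (s - p)) by (apply Rsqr_pos_lt; lra).
  lra.
Qed.

Theorem theorem3 (I : R -> Prop) (f : R -> R) (a b c : R) :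
  is_interval I ->
  I a -> I b -> I c ->
  point_of_convexity I f ((a + b) / 2) ->
  point_of_convexity I f ((a + c) / 2) ->
  point_of_convexity I f ((b + c) / 2) ->
  (f a + f b + f c) / 3 + f ((a + b + c) / 3)
    >= 2 / 3 * (f ((a + b) / 2) + f ((a + c) / 2) + f ((b + c) / 2)).
Proof.
  intros HI Ia Ib Ic Hab Hac Hbc.
  assert (Hba : point_of_convexity I f ((b + a) / 2)) by (rewrite Rplus_comm; exact Hab).
  assert (Hca : point_of_convexity I f ((c + a) / 2)) by (rewrite Rplus_comm; exact Hac).
  assert (Hcb : point_of_convexity I f ((c + b) / 2)) by (rewrite Rplus_comm; exact Hbc).
  destruct (pivot_exists a b c) as [Pa|[Pb|Pc]].
  - assert (H := popoviciu_at_pivot I f a b c HI Ia Ib Ic Hab Hac Hbc Pa).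
    lra.
  - assert (H := popoviciu_at_pivot I f b a c HI Ib Ia Ic Hba Hbc Hac Pb).
    rewrite (Rplus_comm b a) in H.
    lra.
  - assert (H := popoviciu_at_pivot I f c a b HI Ic Ia Ib Hca Hcb Hab Pc).
    replace (c + a + b) with (a + b + c) in H by ring.
    rewrite (Rplus_comm c a), (Rplus_comm c b) in H.
    lra.
Qed.
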